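(* For every positive integer $n$ and every function $\sigma\colon E(K_{4n})\to\{-1,1\}$ with $\left|\sigma\left(E(K_{4n})\right)\right|<n^2+11n+2$, there is a perfect matching $M$ in $K_{4n}$ with $|\sigma(M)|\leq 2$.
   Context: $K_{4n}$ denotes the complete graph on $4n$ vertices and $E(K_{4n})$ its edge set. For a set $F$ of edges, $\sigma(F)=\sum_{e\in F}\sigma(e)$. *)

From mathcomp Require Import all_boot all_order all_algebra.
Set Implicit Arguments. Unset Strict Implicit. Unset Printing Implicit Defensive.
Import Order.TTheory GRing.Theory Num.Theory.

(* The complete graph K_m on vertex set 'I_m: its edges are the 2-element
   subsets of 'I_m. *)
Definition is_edge (m : nat) (e : {set 'I_m}) : bool := #|e| == 2.

(* A signing sigma : E(K_m) -> {-1,1}; represented as a function on all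
   subsets, constrained only on edges. *)
Definition is_signing (m : nat) (sigma : {set 'I_m} -> int) : Prop :=
  forall e : {set 'I_m}, is_edge e -> sigma e = 1%R \/ sigma e = (-1)%R.

Definition sigma_sum (m : nat) (sigma : {set 'I_m} -> int)
  (F : {set {set 'I_m}}) : int := (\sum_(e in F) sigma e)%R.

Definition edges_K (m : nat) : {set {set 'I_m}} := [set e | is_edge e].

Definition perfect_matching (m : nat) (M : {set {set 'I_m}}) : Prop :=
  (forall e, e \in M -> is_edge e) /\
  (forall v : 'I_m, #|[set e in M | v \in e]| = 1%N).

From mathcomp Require Import all_boot all_order all_algebra all_fingroup.
From mathcomp Require Import zify.
From Stdlib Require Import Classical.
Import Order.TTheory GRing.Theory Num.Theory.
Set Implicit Arguments. Unset Strict Implicit. Unset Printing Implicit Defensive.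

(* A perfect matching of K_N is encoded as a fixed-point-free involution p of
   'I_N (x is matched with p x); with s x y := sigma {x, y}, its "pair sum"
   \sum_x s x (p x) equals 2 sigma(M_p), so the goal is |pair sum| <= 4.

   Re-pairing v with q v changes at most four pairs of p,
      hence the pair sum by at most 8, and strictly reduces the disagreement
      with q.  So if one involution has pair sum <= 4 and another >= -4, a
      walk between them meets one with |pair sum| <= 4.
   2. An Erdos-Gallai type bound.  If every perfect matching contains at most
      nu edges of a graph g on N vertices, then twice the number of edges of
      g is at most eg_profile N nu t for some t <= nu.  Left-shifting
      (compressing) g keeps its edge count and this matching property while
      decreasing a potential; in a left-shifted graph one pair {t, 2nu+1-t}
      with t <= nu is a non-edge, which confines every edge.
   3. Counting.  For the graph of negative edges with N = 4n, nu = n - 2,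
      step 2 shows that if every matching had pair sum >= 5 then
      sigma(E) >= n^2 + 11n + 2.  Applying this to sigma and to -sigma gives
      the two end points of the walk of step 1. *)

Section Involutions.
Variable N : nat.
Implicit Types (p q : 'I_N -> 'I_N) (v a x : 'I_N).

Definition fpf_involution p := involutive p /\ forall x, p x != x.

Definition repair p v a : 'I_N -> 'I_N := fun x =>
  if x == v then a else if x == a then v else
  if x == p v then p a else if x == p a then p v else p x.

Lemma repair_out p v a x : x \notin [:: v; a; p v; p a] -> repair p v a x = p x.
Proof.
by rewrite !inE /repair => /norP[/negPf-> /norP[/negPf-> /norP[/negPf-> /negPf->]]].
Qed.

Section Repair.
Variables (p : 'I_N -> 'I_N) (v a : 'I_N).
Hypotheses (ip : fpf_involution p) (va : v != a) (apv : a != p v).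

Let pK : involutive p := ip.1.
Let pvv : p v != v := ip.2 v.
Let paa : p a != a := ip.2 a.
Let pav : p a != v.
Proof. by apply: contra apv => /eqP <-; rewrite pK. Qed.
Let papv : p a != p v.
Proof. by rewrite (inj_eq (inv_inj pK)) eq_sym. Qed.
Let pva : p v != a.
Proof. by rewrite eq_sym. Qed.

Lemma repair_at : [/\ repair p v a v = a, repair p v a a = v,
  repair p v a (p v) = p a & repair p v a (p a) = p v].
Proof.
rewrite /repair !eqxx eq_sym (negPf va) (negPf pvv) (negPf pva).
by rewrite (negPf pav) (negPf paa) (negPf papv).
Qed.

Lemma repair_involution : fpf_involution (repair p v a).
Proof.
split=> x; rewrite /repair.
- case: (eqVneq x v) => [->|xv]; first by rewrite eqxx eq_sym (negPf va).
  case: (eqVneq x a) => [->|xa]; first by rewrite eqxx.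
  case: (eqVneq x (p v)) => [->|xpv].
    by rewrite (negPf pav) (negPf paa) (negPf papv) eqxx.
  case: (eqVneq x (p a)) => [->|xpa]; first by rewrite (negPf pvv) (negPf pva) eqxx.
  have [e1 e2] : p x != v /\ p x != a.
    by split; [apply: contra xpv | apply: contra xpa] => /eqP <-; rewrite pK.
  have [e3 e4] : p x != p v /\ p x != p a by rewrite !(inj_eq (inv_inj pK)).
  by rewrite (negPf e1) (negPf e2) (negPf e3) (negPf e4) pK.
- case: (eqVneq x v) => [->|xv]; first by rewrite eq_sym.
  case: (eqVneq x a) => [->|xa]; first by [].
  case: (eqVneq x (p v)) => [->|xpv]; first by [].
  case: (eqVneq x (p a)) => [->|xpa]; first by rewrite eq_sym.
  exact: ip.2.
Qed.

End Repair.

Definition mismatch p q := #|[set x | p x != q x]|.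

Lemma repair_mismatch p q v : fpf_involution p -> fpf_involution q -> p v != q v ->
  mismatch (repair p v (q v)) q < mismatch p q.
Proof.
move=> [pK pfp] [qK qfp] pq.
rewrite /mismatch (cardsD1 v [set x | p x != q x]) inE pq add1n ltnS.
apply: subset_leq_card; apply/subsetP => x; rewrite !inE /repair.
case: (eqVneq x v) => [->|xv]; first by rewrite eqxx.
case: (eqVneq x (q v)) => [->|xqv]; first by rewrite qK eqxx.
case: (eqVneq x (p v)) => [->|xpv].
  by rewrite pK => _ /=; rewrite eq_sym (can2_eq qK qK).
case: (eqVneq x (p (q v))) => [->|//]; rewrite pK => _.
by rewrite (inj_eq (inv_inj qK)) eq_sym (can2_eq pK pK) eq_sym.
Qed.

Definition canonical_pair m (x : nat) :=
  if x < m then m.-1 - x else if odd x then x.-1 else x.+1.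

Lemma canonical_involution m : ~~ odd N -> ~~ odd m -> m <= N ->
  exists2 p, fpf_involution p & forall x, p x = canonical_pair m x :> nat.
Proof.
move=> evenN evenm mN.
have ltN x : canonical_pair m x < N.
  by have := ltn_ord x; rewrite /canonical_pair; repeat case: ifP => ?; lia.
exists (fun x => Ordinal (ltN x)) => //; split=> x; last first.
  by apply/eqP => /(congr1 val) /=; rewrite /canonical_pair; repeat case: ifP => ?; lia.
apply: val_inj => /=; rewrite /canonical_pair.
by have [xm|xm] := ltnP x m; [|case ox : (odd x)]; repeat case: ifP => ?; lia.
Qed.

End Involutions.

Section PairSums.
Variables (N : nat) (s : 'I_N -> 'I_N -> int).
Implicit Types (p q : 'I_N -> 'I_N) (v a x : 'I_N).

Definition pm_one := forall x y, x != y -> s x y = 1%R \/ s x y = (-1)%R.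

Definition pair_sum p : int := (\sum_x s x (p x))%R.

Hypothesis s_pm : pm_one.

(* A re-pairing moves the pair sum by at most 8 = 4 vertices * 2. *)
Lemma pair_sum_repair p v a : fpf_involution p -> v != a -> a != p v ->
  (`|pair_sum (repair p v a) - pair_sum p| <= 8)%R.
Proof.
move=> ip va apv; have [_ rfp] := repair_involution ip va apv.
rewrite /pair_sum -sumrB; apply: le_trans (ler_norm_sum _ _ _) _.
pose moved := [:: v; a; p v; p a].
apply: (@le_trans _ _ (\sum_x (if x \in moved then 2 else 0))%R).
  apply: ler_sum => x _; case: ifPn => [_|xout]; last by rewrite repair_out // subrr normr0.
  have [xr xp] : x != repair p v a x /\ x != p x by rewrite !(eq_sym x) rfp ip.2.
  by case: (s_pm xr) => ->; case: (s_pm xp) => ->.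
rewrite -big_mkcond /= sumr_const -mulr_natr.
have : #|moved| <= 4 := card_size moved.
set c := #|_|; lia.
Qed.

(* Discrete intermediate value theorem along the re-pairing walk from p to
   q: every step keeps the pair sum <= 4 until it reaches [-4, 4]. *)
Lemma balanced_involution p q : fpf_involution p -> fpf_involution q ->
  (pair_sum p <= 4)%R -> (-4 <= pair_sum q)%R ->
  exists2 r, fpf_involution r & (`|pair_sum r| <= 4)%R.
Proof.
move=> + iq + hq; move Ed: (mismatch p q) => d.
elim/ltn_ind: d p Ed => d IH p Ed ip hp.
have [lo|hi] := lerP (-4) (pair_sum p); first by exists p; rewrite // ler_norml lo.
case: (pickP (fun x => p x != q x)) => [v /= pv | same]; last first.
  have: pair_sum p = pair_sum q.
    by apply: eq_bigr => x _; move/negbFE/eqP: (same x) => ->.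
  lia.
have vqv : v != q v by rewrite eq_sym iq.2.
have qvpv : q v != p v by rewrite eq_sym.
apply: (IH _ _ _ erefl (repair_involution ip vqv qvpv)).
  by rewrite -Ed; apply: repair_mismatch.
have := pair_sum_repair ip vqv qvpv; rewrite ler_norml; lia.
Qed.

End PairSums.

Section Matchings.
Variable N : nat.
Implicit Types (p : 'I_N -> 'I_N) (F : {set 'I_N} -> int).

Lemma sum_edges_at (M : {set {set 'I_N}}) F : (forall e, e \in M -> #|e| = 2) ->
  (\sum_x \sum_(e in [set e in M | x \in e]) F e = 2 * \sum_(e in M) F e)%R.
Proof.
move=> M2; under eq_bigr => x _.
  rewrite (eq_bigl (fun e => (e \in M) && (x \in e))) => [|e]; last by rewrite inE.
  rewrite big_mkcondr /=.
over.
rewrite exchange_big /= mulr_sumr; apply: eq_bigr => e eM.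
by rewrite -big_mkcond /= sumr_const -/#|e| M2 // mulr2n mulrDl mul1r.
Qed.

Lemma sum_edges_K F :
  (2 * \sum_(e in edges_K N) F e = \sum_x \sum_(y | y != x) F [set x; y])%R.
Proof.
rewrite -sum_edges_at; last by move=> e; rewrite inE => /eqP.
apply: eq_bigr => x _.
have inj : {in [set~ x] &, injective (fun y => [set x; y])}.
  move=> y1 y2; rewrite in_setC1 => y1x _ e12.
  by have := set22 x y1; rewrite e12 in_set2 (negPf y1x) => /eqP.
rewrite [RHS](eq_bigl (fun y => y \in [set~ x])) => [|y]; last by rewrite in_setC1.
rewrite -(big_imset _ inj) /=; apply: eq_bigl => e; rewrite !inE /is_edge.
apply/andP/imsetP => [[/cards2P[a [b [ab ->]]]]|[y]].
  rewrite in_set2 => /orP[]/eqP->; first by exists b; rewrite // in_setC1 eq_sym.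
  by exists a; rewrite ?in_setC1 // setUC.
by rewrite in_setC1 => yx ->; rewrite cards2 set21 (eq_sym x) yx.
Qed.

Definition matching_of p : {set {set 'I_N}} := [set [set x; p x] | x : 'I_N].

Lemma matching_of_at p v : fpf_involution p ->
  [set e in matching_of p | v \in e] = [set [set v; p v]].
Proof.
move=> [pK _]; apply/setP => e; rewrite !inE.
apply/andP/eqP => [[/imsetP[x _ ->]]|->]; last by rewrite set21; split => //; apply: imset_f.
by rewrite in_set2 => /orP[]/eqP->; rewrite ?pK 1?setUC.
Qed.

Lemma matching_of_edge p e : fpf_involution p -> e \in matching_of p -> #|e| = 2.
Proof. by move=> [_ pfp] /imsetP[x _ ->]; rewrite cards2 eq_sym pfp. Qed.

Lemma matching_of_perfect p : fpf_involution p -> perfect_matching (matching_of p).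
Proof.
move=> ip; split => [e /(matching_of_edge ip) e2|v]; first by rewrite /is_edge e2.
by rewrite matching_of_at // cards1.
Qed.

Lemma sum_matching_of p F : fpf_involution p ->
  (2 * \sum_(e in matching_of p) F e = \sum_x F [set x; p x])%R.
Proof.
move=> ip; rewrite -sum_edges_at => [|e]; last exact: matching_of_edge.
by apply: eq_bigr => x _; rewrite matching_of_at // big_set1.
Qed.

End Matchings.

Section Shift.
Variable N : nat.
Implicit Types (g : rel 'I_N) (p : 'I_N -> 'I_N) (i j x y : 'I_N).

(* Vertices whose partner is a g-neighbour: twice the number of g-edges in
   the matching p. *)
Definition covered g p := #|[set x | g x (p x)]|.

(* The (i <- j) shift of g: for y other than i and j, the edge jy is moved
   to iy whenever iy is not already an edge. *)
Definition shift g i j : rel 'I_N := fun x y =>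
  if x == i then (if y == j then g x y else g i y || g j y)
  else if y == i then (if x == j then g x y else g i x || g j x)
  else if x == j then g j y && g i y
  else if y == j then g j x && g i x
  else g x y.

Lemma shift_sym g i j : symmetric g -> i != j -> symmetric (shift g i j).
Proof.
move=> gsym ij x y; rewrite /shift.
case: (eqVneq x i) => [->|xi]; case: (eqVneq y i) => [->|yi];
  case: (eqVneq x j) => [xj|xj]; case: (eqVneq y j) => [yj|yj];
  rewrite ?(negPf ij) ?xj ?yj ?eqxx //= ?gsym //.
all: by move: ij; rewrite ?xj ?yj eqxx.
Qed.

Lemma shift_out g i j x y : x != i -> x != j -> y != i -> y != j ->
  shift g i j x y = g x y.
Proof. by rewrite /shift => /negPf-> /negPf-> /negPf-> /negPf->. Qed.

Lemma shift_i g i j y : y != j -> shift g i j i y = g i y || g j y.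
Proof. by rewrite /shift eqxx => /negPf->. Qed.

Lemma shift_j g i j y : i != j -> y != i -> y != j -> shift g i j j y = g j y && g i y.
Proof. by rewrite /shift => ij /negPf-> /negPf->; rewrite eq_sym (negPf ij) eqxx. Qed.

Lemma shift_ij g i j : shift g i j i j = g i j.
Proof. by rewrite /shift !eqxx. Qed.

Lemma shift_ji g i j : symmetric g -> i != j -> shift g i j j i = g i j.
Proof. by move=> gsym ij; rewrite (shift_sym gsym ij) shift_ij. Qed.

Lemma covered_le_perm g g' p p' (f : {perm 'I_N}) :
  (forall x, g x (p x) -> g' (f x) (p' (f x))) -> covered g p <= covered g' p'.
Proof.
move=> gf; rewrite /covered -(card_imset _ (@perm_inj _ f)).
apply: subset_leq_card; apply/subsetP => y /imsetP[x].
by rewrite !inE => gx ->; apply: gf.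
Qed.

Section ShiftCovered.
Variables (g : rel 'I_N) (i j : 'I_N) (p : 'I_N -> 'I_N).
Hypotheses (gsym : symmetric g) (ij : i != j) (ip : fpf_involution p).

Let pK : involutive p := ip.1.
Let pfp : forall x, p x != x := ip.2.

Let shift_away x : x != i -> x != j -> x != p i -> x != p j ->
  shift g i j x (p x) = g x (p x).
Proof.
move=> xi xj xpi xpj; apply: shift_out => //.
  by apply: contra xpi => /eqP <-; rewrite pK.
by apply: contra xpj => /eqP <-; rewrite pK.
Qed.

Lemma shift_covered_paired : p i = j -> covered (shift g i j) p <= covered g p.
Proof.
move=> pij; have pji : p j = i by rewrite -pij pK.
apply: (@covered_le_perm _ _ _ _ 1%g) => x; rewrite perm1.
case: (eqVneq x i) => [->|xi]; first by rewrite pij shift_ij.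
case: (eqVneq x j) => [->|xj]; first by rewrite pji shift_ji // gsym.
by rewrite shift_away ?pij ?pji.
Qed.

Section Unpaired.
Hypothesis pij : p i != j.

Let pji : p j != i.
Proof. by apply: contra pij => /eqP <-; rewrite pK. Qed.

Lemma shift_covered_kept : g i (p i) -> covered (shift g i j) p <= covered g p.
Proof.
move=> gi; apply: (@covered_le_perm _ _ _ _ 1%g) => x; rewrite perm1.
case: (eqVneq x i) => [->|xi]; first by rewrite gi.
case: (eqVneq x j) => [->|xj]; first by rewrite shift_j // => /andP[].
case: (eqVneq x (p i)) => [->|xpi]; first by rewrite pK gsym gi.
case: (eqVneq x (p j)) => [->|xpj]; last by rewrite shift_away.
by rewrite pK (shift_sym gsym ij (p j)) shift_j // gsym => /andP[].
Qed.

(* Otherwise re-pair i with p j; the transposition (i j) maps the shifted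
   edges of p onto g-edges of the new matching. *)
Lemma shift_covered_swapped : ~~ g i (p i) ->
  covered (shift g i j) p <= covered g (repair p i (p j)).
Proof.
move=> ngi; have ipj : i != p j by rewrite eq_sym.
have pjpi : p j != p i by rewrite (inj_eq (inv_inj pK)) eq_sym.
have [r_i r_pj] := repair_at ip ipj pjpi; rewrite pK => r_j r_pi.
apply: (covered_le_perm (f := tperm i j)) => x.
case: (eqVneq x i) => [->|xi].
  by rewrite tpermL r_pi shift_i // (negPf ngi).
case: (eqVneq x j) => [->|xj].
  by rewrite tpermR r_i shift_j // => /andP[].
case: (eqVneq x (p i)) => [->|xpi].
  rewrite pK tpermD 1?eq_sym ?pfp // r_j (shift_sym gsym ij) shift_i //.
  by rewrite (negPf ngi) gsym.
case: (eqVneq x (p j)) => [->|xpj].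
  rewrite pK tpermD 1?eq_sym ?pfp // r_pj (shift_sym gsym ij) shift_j //.
  by move=> /andP[_]; rewrite gsym.
rewrite tpermD 1?eq_sym // repair_out ?shift_away //.
by rewrite !inE pK (negPf xi) (negPf xj) (negPf xpi) (negPf xpj).
Qed.

End Unpaired.

Lemma shift_covered :
  exists2 p', fpf_involution p' & covered (shift g i j) p <= covered g p'.
Proof.
have [pij|pij] := eqVneq (p i) j; first by exists p; last exact: shift_covered_paired.
have [gi|ngi] := boolP (g i (p i)); first by exists p; last exact: shift_covered_kept.
exists (repair p i (p j)); last exact: shift_covered_swapped.
apply: repair_involution => //; last by rewrite (inj_eq (inv_inj pK)) eq_sym.
by apply: contra pij => /eqP ->; rewrite pK.
Qed.

End ShiftCovered.

End Shift.

Section Potential.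
Variable N : nat.
Implicit Types (g : rel 'I_N) (i j x y : 'I_N).

(* adj g x y is the indicator of the edge xy; degsum g is twice the number
   of edges, and the potential weights each edge by its endpoints. *)
Definition adj g x y : nat := (x != y) && g x y.
Definition degsum g := \sum_x \sum_y adj g x y.
Definition potential g := \sum_x \sum_y adj g x y * (x + y).

Lemma sum_split2 (F : 'I_N -> nat) i j : i != j ->
  \sum_x F x = F i + F j + \sum_(x | (x != i) && (x != j)) F x.
Proof.
by move=> ij; rewrite (bigD1 i) //= (bigD1 j) 1?eq_sym //= addnA.
Qed.

Section ShiftRows.
Variables (g : rel 'I_N) (i j : 'I_N).
Hypotheses (gsym : symmetric g) (ij : i != j).

Lemma shift_row_other x : x != i -> x != j ->
  \sum_y adj (shift g i j) x y = \sum_y adj g x y /\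
  (i < j -> \sum_y adj (shift g i j) x y * (x + y) <= \sum_y adj g x y * (x + y)).
Proof.
move=> xi xj; have gs := shift_sym gsym ij.
have rest1 : \sum_(y | (y != i) && (y != j)) adj (shift g i j) x y =
             \sum_(y | (y != i) && (y != j)) adj g x y.
  by apply: eq_bigr => y /andP[yi yj]; rewrite /adj shift_out.
have rest2 : \sum_(y | (y != i) && (y != j)) adj (shift g i j) x y * (x + y) =
             \sum_(y | (y != i) && (y != j)) adj g x y * (x + y).
  by apply: eq_bigr => y /andP[yi yj]; rewrite /adj shift_out.
rewrite !(sum_split2 _ ij) rest1 rest2 /adj gs shift_i // gs shift_j //.
rewrite xi xj /= (gsym x i) (gsym x j); split; first by case: (g i x); case: (g j x).
by move=> lij; case: (g i x); case: (g j x) => //=; lia.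
Qed.

Lemma shift_rows_ij y :
  [/\ adj (shift g i j) i y + adj (shift g i j) j y = adj g i y + adj g j y,
      i < j -> adj (shift g i j) i y * (i + y) + adj (shift g i j) j y * (j + y)
                 <= adj g i y * (i + y) + adj g j y * (j + y) &
      [/\ i < j, y != i, y != j, g j y & ~~ g i y] ->
          adj (shift g i j) i y * (i + y) + adj (shift g i j) j y * (j + y)
                 < adj g i y * (i + y) + adj g j y * (j + y)].
Proof.
have ji : j != i by rewrite eq_sym.
rewrite /adj; case: (eqVneq y i) => [->|yi].
  by rewrite shift_ji // ji gsym; split => // [[]].
case: (eqVneq y j) => [->|yj]; first by rewrite shift_ij; split => // [[]].
rewrite shift_i // shift_j //=.
split; first by case: (g i y); case: (g j y).
  by move=> lij; case: (g i y); case: (g j y) => //=; lia.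
by case=> lij _ _ -> /negbTE ->; rewrite /=; lia.
Qed.

Lemma degsum_shift : degsum (shift g i j) = degsum g.
Proof.
rewrite /degsum (sum_split2 _ ij) [RHS](sum_split2 _ ij) -!big_split /=.
congr (_ + _); first by apply: eq_bigr => y _; case: (shift_rows_ij y).
by apply: eq_bigr => x /andP[xi xj]; case: (shift_row_other xi xj).
Qed.

Lemma potential_shift y0 : i < j -> y0 != i -> y0 != j -> g j y0 -> ~~ g i y0 ->
  potential (shift g i j) < potential g.
Proof.
move=> lij y0i y0j gj ngi.
rewrite /potential (sum_split2 _ ij) [X in _ < X](sum_split2 _ ij) -!big_split /=.
rewrite -addSn; apply: leq_add.
  rewrite (bigD1 y0) //= [X in _ < X](bigD1 y0) //= -addSn; apply: leq_add.
    by case: (shift_rows_ij y0) => _ _; apply.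
  by apply: leq_sum => y _; case: (shift_rows_ij y) => _ /(_ lij).
by apply: leq_sum => x /andP[xi xj]; case: (shift_row_other xi xj) => _ /(_ lij).
Qed.

End ShiftRows.

Definition left_shifted g := forall i j y, i < j -> y != i -> y != j -> g j y -> g i y.

Lemma left_shifting g K : symmetric g ->
  (forall p, fpf_involution p -> covered g p <= K) ->
  exists g', [/\ symmetric g', left_shifted g', degsum g' = degsum g &
                 forall p, fpf_involution p -> covered g' p <= K].
Proof.
move Ep: (potential g) => P; elim/ltn_ind: P g Ep => P IH g Ep gsym gK.
pose witness (ijy : 'I_N * 'I_N * 'I_N) := let: (i, j, y) := ijy in
  [&& i < j, y != i, y != j, g j y & ~~ g i y].
case: (pickP witness) => [[[i j] y] /and5P[lij yi yj gjy ngiy] | none]; last first.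
  exists g; split => // i j y lij yi yj gjy; apply/negPn/negP => ngiy.
  by move: (none (i, j, y)); rewrite /= lij yi yj gjy ngiy.
have ij : i != j by rewrite neq_ltn lij.
have lt_pot : potential (shift g i j) < P.
  by rewrite -Ep; apply: (potential_shift gsym ij lij yi yj gjy ngiy).
have shK p : fpf_involution p -> covered (shift g i j) p <= K.
  by move=> ip; have [p' ip' le] := shift_covered gsym ij ip; apply: leq_trans le (gK _ ip').
have [g' [g'sym g'sh g'deg g'K]] := IH _ lt_pot _ erefl (shift_sym gsym ij) shK.
by exists g'; rewrite g'deg degsum_shift.
Qed.

End Potential.

Lemma card_ord_lt N c : c <= N -> #|[set x : 'I_N | x < c]| = c.
Proof.
by move=> cN; rewrite -sum1dep_card -(big_ord_widen _ (fun=> 1%N) cN) sum1_card card_ord.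
Qed.

Lemma adj_row_le N (g : rel 'I_N) x (P : pred 'I_N) :
  (forall y, adj g x y <= P y) -> \sum_y adj g x y <= #|[set y | P y]|.
Proof.
move=> le; rewrite -sum1dep_card [X in _ <= X]big_mkcond /=.
by apply: leq_sum => y _; move: (le y); case: (P y).
Qed.

Section LeftShifted.
Variables (N : nat) (g : rel 'I_N).
Hypotheses (gsym : symmetric g) (gsh : left_shifted g).
Implicit Types (x y a b t u : 'I_N).

Lemma left_shifted_down1 x (x' : 'I_N) y : x' <= x -> x' != y -> x != y -> g x y -> g x' y.
Proof.
move=> x'x x'y xy gxy; case: (eqVneq x' x) => [-> //|x'x'].
by apply: (gsh _ _ _ gxy); rewrite // 1?eq_sym // ltn_neqAle x'x'.
Qed.

Lemma left_shifted_down x y (x' y' : 'I_N) : x' <= x -> y' <= y -> x != y -> x' != y' ->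
  g x y -> g x' y'.
Proof.
move=> x'x y'y xy x'y' gxy.
have down2 a b b' : b' <= b -> a != b -> a != b' -> g a b -> g a b'.
  move=> b'b ab ab' gab; rewrite gsym.
  by apply: (left_shifted_down1 b'b); rewrite 1?eq_sym // gsym.
case: (eqVneq x' y) => [x'E|x'y]; last first.
  by apply: down2 (left_shifted_down1 x'x _ _ gxy).
have xy' : x != y'.
  apply/eqP => xE; move/eqP: x'y'; apply; apply: ord_inj.
  by move: x'x y'y; rewrite x'E xE; lia.
by apply: (left_shifted_down1 x'x) => //; apply: down2 gxy.
Qed.

Lemma left_shifted_edge t u x y : t != u -> ~~ g t u -> x != y -> g x y ->
  [|| x < t, y < t | (x < u) && (y < u)].
Proof.
move=> tu ngtu xy gxy; apply/negPn/negP; rewrite !negb_or -!leqNgt => /and3P[tx ty].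
rewrite negb_and -!leqNgt => /orP[ux|uy].
  by move: ngtu; rewrite gsym (left_shifted_down ux ty xy _ gxy) // eq_sym.
by move: ngtu; rewrite (left_shifted_down tx uy xy tu gxy).
Qed.

(* The degree bound for vertex x obtained from a non-edge {t, u}, t < u:
   all others, neighbours below u, or neighbours below t. *)
Definition profile_row (t u x : nat) := if x < t then N.-1 else if x < u then u.-1 else t.

Lemma left_shifted_row t u x : t < u -> ~~ g t u -> \sum_y adj g x y <= profile_row t u x.
Proof.
move=> tu ngtu; have edge := left_shifted_edge (negbT (ltn_eqF tu)) ngtu.
rewrite /profile_row; case: ifPn => [_|xt].
  apply: leq_trans (adj_row_le (P := fun y => y != x) _) _.
    by move=> y; rewrite /adj eq_sym; case: (y != x); case: (g x y).
  have -> : [set y | y != x] = [set~ x] by apply/setP => y; rewrite !inE.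
  by rewrite cardsC1 card_ord.
case: ifPn => [xu|ux].
  apply: leq_trans (adj_row_le (P := fun y => (y < u) && (y != x)) _) _.
    move=> y; rewrite /adj; case: (eqVneq x y) => //= xy; case: (boolP (g x y)) => //= gxy.
    rewrite ?andbT; have := edge _ _ xy gxy; rewrite (negPf xt) /=.
    by case/orP => [yt|/andP[_ ->] //]; rewrite (ltn_trans yt tu).
  have -> : [set y : 'I_N | (y < u) && (y != x)] = [set y : 'I_N | y < u] :\ x.
    by apply/setP => y; rewrite !inE andbC.
  have := cardsD1 x [set y : 'I_N | y < u].
  by rewrite card_ord_lt ?(ltnW (ltn_ord u)) // inE xu /=; lia.
apply: leq_trans (adj_row_le (P := fun y : 'I_N => y < t) _) _; last first.
  by rewrite card_ord_lt // ltnW.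
move=> y; rewrite /adj; case: (eqVneq x y) => //= xy; case: (boolP (g x y)) => //= gxy.
by have := edge _ _ xy gxy; rewrite (negPf xt) (negPf ux) /= orbF => ->.
Qed.

End LeftShifted.

(* Twice the number of edges allowed by the non-edge {t, 2nu+1-t}. *)
Definition eg_profile N nu t :=
  let u := 2 * nu + 1 - t in t * N.-1 + (u - t) * u.-1 + (N - u) * t.

Lemma sum_profile_row N (t u : nat) : t <= u -> u <= N ->
  \sum_(x < N) profile_row N t u x = t * N.-1 + (u - t) * u.-1 + (N - u) * t.
Proof.
move=> tu uN; rewrite -(big_mkord xpredT).
rewrite (@big_cat_nat _ _ _ t 0 N) ?(leq_trans tu) // (@big_cat_nat _ _ _ u t N) //=.
rewrite (@eq_big_nat _ _ _ 0 t _ (fun=> N.-1)) => [|x /andP[_ xt]]; last first.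
  by rewrite /profile_row xt.
rewrite (@eq_big_nat _ _ _ t u _ (fun=> u.-1)) => [|x /andP[tx xu]]; last first.
  by rewrite /profile_row xu ltnNge tx.
rewrite (@eq_big_nat _ _ _ u N _ (fun=> t)) => [|x /andP[ux _]]; last first.
  by rewrite /profile_row ltnNge (leq_trans tu ux) ltnNge ux.
by rewrite !sum_nat_const_nat subn0 addnA.
Qed.

Section ShiftedBound.
Variables (N nu : nat) (g : rel 'I_N).
Hypotheses (evenN : ~~ odd N) (nuN : 2 * nu + 2 <= N).
Hypotheses (gsym : symmetric g) (gsh : left_shifted g).
Hypothesis gK : forall p, fpf_involution p -> covered g p <= 2 * nu + 1.

(* Some pair {t, 2nu+1-t} with t <= nu is a non-edge, for otherwise the
   matching pairing x with 2nu+1-x covers the 2nu+2 vertices below 2nu+2. *)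
Lemma shifted_nonedge :
  exists t u : 'I_N, [/\ t <= nu, u = 2 * nu + 1 - t :> nat & ~~ g t u].
Proof.
have [|p0 ip0 p0E] := canonical_involution evenN _ nuN; first by lia.
case: (pickP (fun t : 'I_N => (t <= nu) && ~~ g t (p0 t))) => [t /andP[tnu ngt] | none].
  by exists t, (p0 t); split => //; rewrite p0E /canonical_pair ifT //; lia.
exfalso; move: (gK ip0); apply/negP; rewrite -ltnNge /covered.
apply: (@leq_trans #|[set x : 'I_N | x < 2 * nu + 2]|); first by rewrite card_ord_lt //; lia.
apply: subset_leq_card; apply/subsetP => x; rewrite !inE => xlt.
case: (leqP x nu) => [xnu|nux]; first by move: (none x); rewrite /= xnu => /negbFE.
have p0x : p0 x <= nu by rewrite p0E /canonical_pair xlt; lia.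
by move: (none (p0 x)); rewrite /= p0x ip0.1 gsym => /negbFE.
Qed.

Lemma left_shifted_degsum : exists2 t, t <= nu & degsum g <= eg_profile N nu t.
Proof.
have [t [u [tnu uE ngtu]]] := shifted_nonedge.
have tu : t < u by rewrite uE; lia.
exists t => //; rewrite /eg_profile /= -uE -sum_profile_row ?(ltnW tu) ?(ltnW (ltn_ord u)) //.
by apply: leq_sum => x _; apply: left_shifted_row.
Qed.

End ShiftedBound.

Theorem degsum_matching_bound N nu (g : rel 'I_N) : ~~ odd N -> 2 * nu + 2 <= N ->
  symmetric g -> (forall p, fpf_involution p -> covered g p <= 2 * nu + 1) ->
  exists2 t, t <= nu & degsum g <= eg_profile N nu t.
Proof.
move=> evenN nuN gsym gK.
have [g' [g'sym g'sh <- g'K]] := left_shifting gsym gK.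
exact: left_shifted_degsum.
Qed.

Section Signing.
Variables (N : nat) (sigma : {set 'I_N} -> int).
Hypothesis sigma_pm : is_signing sigma.

Definition edge_sign (x y : 'I_N) : int := sigma [set x; y].

Definition negative : rel 'I_N := fun x y => edge_sign x y == (-1)%R.

Lemma edge_sign_pm : pm_one edge_sign.
Proof. by move=> x y xy; apply: sigma_pm; rewrite /is_edge cards2 xy. Qed.

Lemma negative_sym : symmetric negative.
Proof. by move=> x y; rewrite /negative /edge_sign setUC. Qed.

Lemma pair_sum_negative p : fpf_involution p ->
  pair_sum edge_sign p = (N%:Z - 2 * (covered negative p)%:Z)%R.
Proof.
move=> [_ pfp]; have -> : (N%:Z = \sum_(x : 'I_N) 1)%R by rewrite sumr_const card_ord natz.
rewrite /pair_sum /covered -sum1dep_card -natz natr_sum mulr_sumr.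
rewrite (big_mkcond (fun i => negative i (p i))) -sumrB /=.
apply: eq_bigr => x _; have xp : x != p x by rewrite eq_sym pfp.
by rewrite /negative; case: (edge_sign_pm xp) => ->.
Qed.

Lemma row_sum_negative x :
  (\sum_(y | y != x) edge_sign x y = N.-1%:Z - 2 * (\sum_y adj negative x y)%:Z)%R.
Proof.
have cardC : #|[set y : 'I_N | y != x]| = N.-1.
  have -> : [set y : 'I_N | y != x] = [set~ x] by apply/setP => y; rewrite !inE.
  by rewrite cardsC1 card_ord.
rewrite [in RHS](bigD1 x) //= {1}/adj eqxx add0n -cardC -sum1dep_card -!natz !natr_sum.
rewrite mulr_sumr -sumrB; apply: eq_bigr => y yx; rewrite /adj eq_sym yx /negative.
by rewrite eq_sym in yx; case: (edge_sign_pm yx) => ->.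
Qed.

Lemma edge_sum_negative :
  (2 * sigma_sum sigma (edges_K N) = (N * N.-1)%:Z - 2 * (degsum negative)%:Z)%R.
Proof.
rewrite /sigma_sum sum_edges_K.
under eq_bigr => x _ do rewrite row_sum_negative -!natz.
rewrite sumrB sumr_const card_ord -mulr_sumr -natr_sum; congr (_ - 2 * _)%R.
  by rewrite -[RHS]natz natrM mulr_natl.
by rewrite natz.
Qed.

Lemma matching_sum p : fpf_involution p ->
  (2 * sigma_sum sigma (matching_of p) = pair_sum edge_sign p)%R.
Proof. exact: sum_matching_of. Qed.

End Signing.

(* For N = 4k + 8 and nu = k the profile is at most k(7k + 15), its value
   at t = k. *)
Lemma eg_profile_le k t : t <= k -> eg_profile (4 * k + 8) k t <= k * (7 * k + 15).
Proof.
move=> tk; rewrite /eg_profile /=.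
have -> : (4 * k + 8).-1 = 4 * k + 7 by lia.
have -> : (2 * k + 1 - t).-1 = 2 * k - t by lia.
have -> : 2 * k + 1 - t - t = 2 * k + 1 - 2 * t by lia.
have -> : 4 * k + 8 - (2 * k + 1 - t) = 2 * k + 7 + t by lia.
nia.
Qed.

(* If |sigma(E)| is small, some perfect matching has pair sum <= 4: otherwise
   it contains at most n - 2 negative edges, and the Erdos-Gallai bound
   forces sigma(E) >= n^2 + 11n + 2. *)
Lemma low_matching n (sigma : {set 'I_(4 * n)} -> int) : 0 < n -> is_signing sigma ->
  (`|sigma_sum sigma (edges_K (4 * n))| < (n ^ 2 + 11 * n + 2)%:Z)%R ->
  exists2 p, fpf_involution p & (pair_sum (edge_sign sigma) p <= 4)%R.
Proof.
move=> n0 sig bound; apply: NNPP => none.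
have high p : fpf_involution p -> (5 <= pair_sum (edge_sign sigma) p)%R.
  by move=> ip; rewrite leNgt; apply/negP => low; apply: none; exists p => //; lia.
have few p : fpf_involution p -> covered (negative sigma) p <= 2 * (n - 2) + 1.
  by move=> ip; have := high p ip; rewrite pair_sum_negative //; lia.
have evenN : ~~ odd (4 * n) by lia.
have [n_small|n_large] := ltnP n 2.
  have [p0 ip0 _] := canonical_involution (m := 0) evenN isT (leq0n _).
  by have := high p0 ip0; rewrite pair_sum_negative //; lia.
have nuN : 2 * (n - 2) + 2 <= 4 * n by lia.
have [t tk deg] := degsum_matching_bound evenN nuN (negative_sym sigma) few.
have n4 : 4 * n = 4 * (n - 2) + 8 by lia.
have := eg_profile_le tk; rewrite -n4.
have := edge_sum_negative sig; move: bound; rewrite ltr_norml.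
nia.
Qed.

Lemma is_signing_opp N (sigma : {set 'I_N} -> int) :
  is_signing sigma -> is_signing (fun e => - sigma e)%R.
Proof. by move=> sig e /sig[] ->; [right|left]; rewrite ?opprK. Qed.

Theorem corollary4 (n : nat) (sigma : {set 'I_(4 * n)} -> int) :
  (0 < n)%N ->
  is_signing sigma ->
  (`|sigma_sum sigma (edges_K (4 * n))| < (n ^ 2 + 11 * n + 2)%:Z)%R ->
  exists M : {set {set 'I_(4 * n)}},
    perfect_matching M /\ (`|sigma_sum sigma M| <= 2)%R.
Proof.
move=> n0 sig bound.
have [p ip low] := low_matching n0 sig bound.
have bound' : (`|sigma_sum (fun e => - sigma e)%R (edges_K (4 * n))|
                 < (n ^ 2 + 11 * n + 2)%:Z)%R.
  by rewrite /sigma_sum sumrN normrN.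
have [q iq high'] := low_matching n0 (is_signing_opp sig) bound'.
have high : (-4 <= pair_sum (edge_sign sigma) q)%R.
  by move: high'; rewrite /pair_sum /edge_sign sumrN lerNl.
have [r ir balanced] := balanced_involution (edge_sign_pm sig) ip iq low high.
exists (matching_of r); split; first exact: matching_of_perfect.
by move: balanced (matching_sum sigma ir); rewrite !ler_norml; lia.
Qed.
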